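(* Let $N$ be a finite set and $\mathcal{F} \subseteq 2^N$ a set family. If $\mathcal{F}$ satisfies (B$^\natural$-EXC$_{\rm m}$), then $\mathcal{F}$ satisfies (B$^\natural$-EXC$_{\pm}$).
   Context: Notation: $X - i = X \setminus \{i\}$, $Y + i = Y \cup \{i\}$, $X - i + j = (X\setminus\{i\})\cup\{j\}$, $Y + i - k = (Y \cup\{i\})\setminus\{k\}$. (B$^\natural$-EXC$_{\rm m}$): for any $X, Y \in \mathcal{F}$ and $I \subseteq X\setminus Y$ there exists $J \subseteq Y\setminus X$ with $(X\setminus I)\cup J \in \mathcal{F}$ and $(Y\setminus J)\cup I \in \mathcal{F}$. (B$^\natural$-EXC$_{\pm}$): for any $X, Y \in \mathcal{F}$ and $i \in X\setminus Y$, both (a) and (b) hold, where (a): $X - i \in \mathcal{F}$, or $X - i + j \in \mathcal{F}$ for some $j \in Y\setminus X$; (b): $Y + i \in \mathcal{F}$, or $Y + i - k \in \mathcal{F}$ for some $k \in Y\setminus X$. *)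

From mathcomp Require Import all_boot.
Set Implicit Arguments. Unset Strict Implicit. Unset Printing Implicit Defensive.

Definition exc_m (N : finType) (F : {set {set N}}) : Prop :=
  forall X Y : {set N}, X \in F -> Y \in F ->
  forall I : {set N}, I \subset X :\: Y ->
  exists J : {set N}, [/\ J \subset Y :\: X,
                          (X :\: I) :|: J \in F &
                          (Y :\: J) :|: I \in F].

(* (B♮-EXC_±): for X, Y in F and i ∈ X \ Y, both
   (a) X - i ∈ F or X - i + j ∈ F for some j ∈ Y \ X, and
   (b) Y + i ∈ F or Y + i - k ∈ F for some k ∈ Y \ X. *)
Definition exc_pm (N : finType) (F : {set {set N}}) : Prop :=
  forall X Y : {set N}, X \in F -> Y \in F ->
  forall i : N, i \in X :\: Y ->
  (X :\ i \in F \/ exists2 j, j \in Y :\: X & j |: (X :\ i) \in F) /\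
  (i |: Y \in F \/ exists2 k, k \in Y :\: X & (i |: Y) :\ k \in F).

(* Applying (B♮-EXC_m) to X, Y and I = {i} gives J ⊆ Y \ X with
   (X - i) ∪ J ∈ F.  Exchanging J - j between this set and X returns a subset
   of X \ ((X - i) ∪ J) = {i}: either nothing comes back, and X - i + j ∈ F,
   or i comes back, and (X - i) ∪ (J - j) ∈ F with a smaller J.  This proves
   (a).  (B♮-EXC_m) is invariant under complementing every member of F, and
   in the complemented family (a) for the pair (N \ Y, N \ X) says exactly (b). *)

From mathcomp Require Import all_boot.

Set Implicit Arguments.
Unset Strict Implicit.
Unset Printing Implicit Defensive.

Definition setC_family (N : finType) (F : {set {set N}}) : {set {set N}} :=
  [set ~: X | X in F].

Definition exc_minus (N : finType) (F : {set {set N}}) : Prop :=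
  forall X Y : {set N}, X \in F -> Y \in F ->
  forall i : N, i \in X :\: Y ->
  X :\ i \in F \/ exists2 j, j \in Y :\: X & j |: (X :\ i) \in F.

Section Exchange.
Variables (N : finType) (F : {set {set N}}).

Lemma mem_setC_family (X : {set N}) : (X \in setC_family F) = (~: X \in F).
Proof. by rewrite -{1}(setCK X) (mem_imset _ _ (@setC_inj N)). Qed.

Lemma exc_m_setC_family : exc_m F -> exc_m (setC_family F).
Proof.
move=> excF X Y; rewrite !mem_setC_family => XF YF I sI.
have sI' : I \subset ~: Y :\: ~: X by rewrite setDE setCK setIC -setDE.
have [J [sJ XJF YJF]] := excF _ _ YF XF I sI'.
have disjIJ x : x \in I -> x \notin J.
  move=> /(subsetP sI); rewrite inE => /andP[_ xX].
  by apply: (contraL _ xX) => /(subsetP sJ); rewrite !inE => /andP[].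
exists J; split; first by rewrite setDE setCK setIC -setDE in sJ.
- rewrite mem_setC_family; congr (_ \in F): YJF; apply/setP=> x; rewrite !inE.
  by case: (boolP (x \in I)) => [/disjIJ/negbTE->|]; case: (x \in J); case: (x \in X).
- rewrite mem_setC_family; congr (_ \in F): XJF; apply/setP=> x; rewrite !inE.
  by case: (boolP (x \in I)) => [/disjIJ/negbTE->|]; case: (x \in J); case: (x \in Y).
Qed.

Hypothesis excF : exc_m F.

Lemma exc_m_shrink_swap (X J : {set N}) (i : N) :
  X \in F -> i \in X -> J \subset ~: X -> (X :\ i) :|: J \in F ->
  X :\ i \in F \/ exists2 j, j \in J & j |: (X :\ i) \in F.
Proof.
move=> XF iX; move: {2}#|J| (leqnn #|J|) => n; elim: n J => [|n IH] J.
  by rewrite leqn0 cards_eq0 => /eqP-> _; rewrite setU0; left.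
have [-> _ _|[j jJ] cardJ sJ XJF] := set_0Vmem J; first by rewrite setU0; left.
have notinX x : x \in J -> x \notin X by move/(subsetP sJ); rewrite inE.
have sJj : J :\ j \subset ((X :\ i) :|: J) :\: X.
  by apply/subsetP=> x; rewrite !inE => /andP[_ xJ]; rewrite xJ orbT notinX.
have [K [sK ZKF XKF]] := excF XJF XF sJj.
have : K \subset [set i].
  apply: (subset_trans sK); apply/subsetP=> x; rewrite !inE.
  by have [//|_] := eqVneq x i; case: (x \in X); rewrite /= ?andbF.
rewrite subset1 => /orP[/eqP K_i | /eqP K0].
- have cardJj : #|J :\ j| <= n by rewrite (cardsD1 j J) jJ in cardJ.
  have sJj' : J :\ j \subset ~: X by apply: subset_trans sJ; apply: subD1set.
  rewrite K_i in XKF.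
  have [|[k]] := IH _ cardJj sJj' XKF; first by left.
  by rewrite inE => /andP[_ kJ] kF; right; exists k.
- right; exists j => //; move: ZKF; rewrite K0 setU0; congr (_ \in F).
  apply/setP=> x; rewrite !inE.
  have [->|_] := eqVneq x j; first by rewrite jJ orbT.
  by case: (boolP (x \in J)) => [/notinX/negbTE->|]; rewrite ?andbF ?orbF.
Qed.

Lemma exc_m_exc_minus : exc_minus F.
Proof.
move=> X Y XF YF i iXY.
have [iX _] := setDP iXY.
have sI : [set i] \subset X :\: Y by rewrite sub1set.
have [J [sJ XJF _]] := excF XF YF sI.
have sJX : J \subset ~: X by apply: subset_trans sJ _; rewrite setDE subsetIr.
have [|[j jJ jF]] := exc_m_shrink_swap XF iX sJX XJF; first by left.
by right; exists j; first exact: (subsetP sJ).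
Qed.

End Exchange.

Lemma exc_pm_of_exc_minus (N : finType) (F : {set {set N}}) :
  exc_minus F -> exc_minus (setC_family F) -> exc_pm F.
Proof.
move=> minusF minusFC X Y XF YF i iXY; split; first exact: minusF.
have CF Z : Z \in F -> ~: Z \in setC_family F by rewrite mem_setC_family setCK.
have iYX : i \in ~: Y :\: ~: X by move: iXY; rewrite !inE negbK andbC.
have [|[k]] := minusFC _ _ (CF _ YF) (CF _ XF) i iYX.
  by rewrite mem_setC_family setCD setCK setUC; left.
rewrite setDE !setCK setIC -setDE => kYX.
rewrite mem_setC_family setCU setCD setCK => kF; right; exists k => //.
by move: kF; rewrite setUC setDE setIC.
Qed.

Theorem proposition5 (N : finType) (F : {set {set N}}) :
  exc_m F -> exc_pm F.
Proof.
move=> excF; apply: exc_pm_of_exc_minus.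
- exact: exc_m_exc_minus.
- exact/exc_m_exc_minus/exc_m_setC_family.
Qed.
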